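(* Let $p,q$ be positive integers with $p+q$ odd, let $n\ge3$ be odd, and let $s$ be a nonempty finite sequence of elements of $\{p,q\}$. The permutation $x\mapsto A^{p,q}_n(x,s)$ of $\{p,q\}^n$ has exactly two orbits (cycles) of length $2^{\lceil n/2\rceil}$ if the length $|s|$ of $s$ is odd and the sum $\Sigma(s)$ of the entries of $s$ is odd; otherwise it has no orbits of length $2^{\lceil n/2\rceil}$.
   Context: Define $\mathrm{Opp}(p)=q$, $\mathrm{Opp}(q)=p$. For $x\in\{p,q\}$ and a finite sequence $s=(s_1,\dots,s_m)$ of positive integers, $RLD^{p,q}(x,s)$ is the sequence over $\{p,q\}$ consisting of $s_1$ copies of $x$, then $s_2$ copies of $\mathrm{Opp}(x)$, then $s_3$ copies of $x$, and so on alternately. For $n\ge1$ and $x=(x_1,\dots,x_n)\in\{p,q\}^n$: $RLD^{p,q}_1(x_1,s)=RLD^{p,q}(x_1,s)$ and $RLD^{p,q}_n(x_{1:n},s)=RLD^{p,q}(x_n, RLD^{p,q}_{n-1}(x_{1:n-1},s))$. For a nonempty sequence $t$ over $\{p,q\}$, $\mathrm{OppEnd}(t)=\mathrm{Opp}(\text{last entry of } t)$. The automaton $A^{p,q}_n$ has state set $\{p,q\}^n$; for a state $x$ and a nonempty finite sequence $s$ over $\{p,q\}$, $A^{p,q}_n(x,s)$ is the state whose $i$-th coordinate is $\mathrm{OppEnd}(RLD^{p,q}_i(x_{1:i},s))$, $i=1,\dots,n$. The map $x\mapsto A^{p,q}_n(x,s)$ is a permutation of $\{p,q\}^n$. *)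

From mathcomp Require Import all_boot.
Set Implicit Arguments. Unset Strict Implicit. Unset Printing Implicit Defensive.

(* Opp(p) = q, Opp(q) = p (applied only to elements of {p,q}). *)
Definition Opp (p q x : nat) : nat := if x == p then q else p.

Lemma Opp_in (p q x : nat) : Opp p q x \in [:: p; q].
Proof. by rewrite /Opp; case: (x == p); rewrite !inE eqxx ?orbT. Qed.

Fixpoint RLD (p q x : nat) (s : seq nat) : seq nat :=
  match s with
  | [::] => [::]
  | a :: s' => nseq a x ++ RLD p q (Opp p q x) s'
  end.

(* RLD_n(x_{1:n}, s) = RLD(x_n, RLD_{n-1}(x_{1:n-1}, s)), RLD_1(x_1,s)=RLD(x_1,s) *)
Definition RLDn (p q : nat) (xs s : seq nat) : seq nat :=
  foldl (fun t x => RLD p q x t) s xs.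

(* OppEnd(t) = Opp(last entry of t) (t nonempty in all uses) *)
Definition OppEnd (p q : nat) (t : seq nat) : nat := Opp p q (last 0 t).

Definition PQ (p q : nat) := seq_sub [:: p; q].
Definition State (p q n : nat) := n.-tuple (PQ p q).

(* i-th coordinate (i = 1..n, here index i : 'I_n stands for i+1) *)
Definition A_coord (p q n : nat) (x : State p q n) (s : seq nat) (i : 'I_n) : PQ p q :=
  SeqSub (Opp_in p q (last 0 (RLDn p q (take i.+1 (map (@ssval _ _) x)) s))).

Definition A_map (p q n : nat) (s : seq nat) (x : State p q n) : State p q n :=
  [tuple A_coord x s i | i < n].

Lemma A_coordE p q n (x : State p q n) s (i : 'I_n) :
  ssval (A_coord x s i) = OppEnd p q (RLDn p q (take i.+1 (map (@ssval _ _) x)) s).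
Proof. by []. Qed.

Definition orbits (T : finType) (f : T -> T) : {set {set T}} :=
  [set [set y | fconnect f x y] | x : T].

Definition num_orbits_of_length (T : finType) (f : T -> T) (L : nat) : nat :=
  #|[set C in orbits f | #|C| == L]|.

From mathcomp Require Import all_boot.
Set Implicit Arguments. Unset Strict Implicit. Unset Printing Implicit Defensive.

(* The first coordinate of A(x, s) is Opp^|s|(x_1), and the remaining
   coordinates are those of the automaton run on the input RLD(x_1, s).
   If |s| is even, x_1 is fixed and the orbit of x is the orbit of its tail
   under the input RLD(x_1, s).  If |s| is odd, x_1 alternates, so orbits have
   even length, and two steps act on the tail as one step with the input
   RLD(x_1, s) ++ RLD(Opp x_1, s), of even length 2 Sigma(s) and of sum
   (p + q) Sigma(s), which has the parity of Sigma(s) when p + q is odd.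
   Peeling off two coordinates at a time shows that every orbit length divides
   2^ceil(n/2), and, by induction on odd n >= 3, that exactly 2^(ceil(n/2) + 1)
   states lie on orbits of that length when |s| and Sigma(s) are both odd, and
   none otherwise. *)

Section ExactPeriod.

Variables (T : eqType) (f : T -> T).

Definition exact_period (x : T) (L : nat) : bool :=
  [&& 0 < L, iter L f x == x & all (fun k => iter k f x != x) (iota 1 L.-1)].

Lemma exact_periodP x L :
  reflect [/\ 0 < L, iter L f x = x & forall k, 0 < k < L -> iter k f x <> x]
          (exact_period x L).
Proof.
apply: (iffP and3P) => [[L_gt0 /eqP fix_L /allP no_k] | [L_gt0 fix_L no_k]].
  split=> // k /andP[k_gt0 k_lt_L]; apply/eqP/no_k.
  by rewrite mem_iota k_gt0 add1n prednK.
split=> //; first exact/eqP.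
by apply/allP => k; rewrite mem_iota add1n prednK // => /no_k/eqP.
Qed.

Lemma exact_period_le x L M : 0 < M -> iter M f x = x -> exact_period x L -> L <= M.
Proof.
move=> M_gt0 fix_M /exact_periodP[_ _ no_k]; rewrite leqNgt; apply/negP => M_lt_L.
by apply: (no_k M); rewrite ?M_gt0.
Qed.

End ExactPeriod.

Lemma eq_exact_period (T U : eqType) (f : T -> T) (g : U -> U) x y :
  (forall k, (iter k f x == x) = (iter k g y == y)) ->
  exact_period f x =1 exact_period g y.
Proof.
move=> eq_fix L; rewrite /exact_period eq_fix; congr [&& _, _ & _].
by apply: eq_all => k; rewrite eq_fix.
Qed.

Lemma exact_period_double (T U : eqType) (f : T -> T) (g : U -> U) x y :
  (forall k, (iter k.*2 f x == x) = (iter k g y == y)) ->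
  (forall k, iter k.*2.+1 f x != x) ->
  forall L, exact_period f x L = ~~ odd L && exact_period g y L./2.
Proof.
move=> even_fix odd_move L; have [L_odd | L_even] := boolP (odd L).
  apply/negbTE/exact_periodP => -[_ + _].
  by rewrite -(odd_double_half L) L_odd add1n => /eqP; apply/negP/odd_move.
move: (L./2) (even_halfK L_even) => h <-.
apply/exact_periodP/exact_periodP => [[h2_gt0 fix_h2 no_k] | [h_gt0 fix_h no_k]].
  split=> [| | k /andP[k_gt0 k_lt_h]]; first by rewrite -double_gt0.
    by apply/eqP; rewrite -even_fix; apply/eqP.
  move/eqP; rewrite -even_fix => /eqP; apply: no_k.
  by rewrite double_gt0 k_gt0 ltn_double.
split=> [| | k /andP[k_gt0 k_lt_h2]]; first by rewrite double_gt0.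
  by apply/eqP; rewrite even_fix; apply/eqP.
have [k_odd | k_even] := boolP (odd k).
  by apply/eqP; rewrite -(odd_double_half k) k_odd add1n.
rewrite -(even_halfK k_even) => /eqP; rewrite even_fix => /eqP; apply: no_k.
by rewrite -double_gt0 -[_ < h]ltn_double even_halfK // k_gt0.
Qed.

Lemma iter_fix_dvdn (T : Type) (f : T -> T) x M N :
  M %| N -> iter M f x = x -> iter N f x = x.
Proof. by move=> /dvdnP[k ->] fix_M; rewrite iterM iter_fix. Qed.

Section OrbitsOfPermutation.

Variables (T : finType) (f : T -> T).
Hypothesis f_inj : injective f.

Lemma order_exact_period x L : (order f x == L) = exact_period f x L.
Proof.
apply/eqP/exact_periodP => [<- | [L_gt0 fix_L no_k]].
  split=> [| | k /andP[k_gt0 k_lt] fix_k]; [exact: order_gt0 | exact: iter_order |].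
  by move: (findex_iter k_lt); rewrite fix_k findex0 => k0; rewrite -k0 in k_gt0.
have [lt_L | gt_L | //] := ltngtP (order f x) L.
  by case: (no_k (order f x)); rewrite ?order_gt0 ?iter_order.
by move: (findex_iter gt_L); rewrite fix_L findex0 => L0; rewrite -L0 in L_gt0.
Qed.

Lemma card_order_eq L : #|[set x | order f x == L]| = L * num_orbits_of_length f L.
Proof.
pose orb x := [set y | fconnect f x y].
have orbE x y : fconnect f x y -> orb x = orb y.
  by move=> xy; apply/setP => z; rewrite !inE (same_connect (fconnect_sym f_inj) xy).
have card_orb x : #|orb x| = order f x by apply: eq_card => y; rewrite inE.
set X := [set x | order f x == L].
have blockE x : x \in X -> [set y in X | orb x == orb y] = orb x.
  rewrite inE => /eqP ox; apply/setP => y; rewrite !inE.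
  apply/andP/idP => [[_ /eqP oxy] | xy].
    have : y \in orb y by rewrite inE connect0.
    by rewrite -oxy inE.
  by rewrite -card_orb -(orbE _ _ xy) card_orb ox.
rewrite /num_orbits_of_length.
have -> : [set C in orbits f | #|C| == L] = preim_partition orb X.
  apply/setP => C; rewrite inE; apply/andP/imsetP => [[/imsetP[x _ ->] oxL] | [x xX ->]].
    by exists x; rewrite ?blockE // inE -card_orb.
  rewrite blockE //; split; first exact: imset_f.
  by rewrite card_orb; rewrite inE in xX.
rewrite (card_partition (preim_partitionP orb X)) mulnC -sum_nat_const.
apply: eq_bigr => _ /imsetP[x xX ->].
by rewrite blockE // card_orb; apply/eqP; rewrite inE in xX.
Qed.

End OrbitsOfPermutation.

Section Words.

Variables (T : eqType) (A : seq T).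

Fixpoint words (n : nat) : seq (seq T) :=
  if n is m.+1 then [seq x :: w | x <- A, w <- words m] else [:: [::]].

Lemma size_words n : size (words n) = size A ^ n.
Proof. by elim: n => //= n IH; rewrite size_allpairs IH expnS. Qed.

Lemma uniq_words n : uniq A -> uniq (words n).
Proof.
move=> A_uniq; elim: n => //= n IH.
by apply: allpairs_uniq => // -[x w] [y v] _ _ [-> ->].
Qed.

Lemma mem_words n w : (w \in words n) = (size w == n) && all (mem A) w.
Proof.
elim: n w => [|n IH] [|x w] //=; first by apply/negbTE/allpairsP => -[[y v] [_ _]].
rewrite eqSS; apply/allpairsP/and3P => [[[y v] /= [y_A v_w [-> ->]]] | [sz x_A w_A]].
  by move: v_w; rewrite IH => /andP[-> ->].
by exists (x, w); rewrite /= IH sz.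
Qed.

End Words.

Section Automaton.

Variables p q : nat.

Local Notation Opp := (Opp p q).
Local Notation RLD := (RLD p q).

Lemma OppK x : x \in [:: p; q] -> Opp (Opp x) = x.
Proof.
by rewrite !inE /Opp => /orP[]/eqP->;
  case: (eqVneq q p) => [-> | /negbTE qp]; rewrite ?eqxx ?qp.
Qed.

Lemma Opp_neq x : p != q -> Opp x != x.
Proof. by move=> pq; rewrite /Opp; case: (eqVneq x p) => [-> | ]; rewrite eq_sym. Qed.

Lemma iter_Opp k x : x \in [:: p; q] -> iter k Opp x = if odd k then Opp x else x.
Proof. by move=> x_pq; elim: k => //= k ->; case: (odd k); rewrite //= OppK. Qed.

Lemma all_RLD x s : x \in [:: p; q] -> all (mem [:: p; q]) (RLD x s).
Proof.
elim: s x => //= a s IH x x_pq.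
by rewrite all_cat all_nseq IH ?Opp_in // andbT orbC; apply/orP; left.
Qed.

Lemma RLD_cat x u v : RLD x (u ++ v) = RLD x u ++ RLD (iter (size u) Opp x) v.
Proof. by elim: u x => //= a u IH x; rewrite IH catA -iterSr. Qed.

Lemma size_RLD x s : size (RLD x s) = sumn s.
Proof. by elim: s x => //= a s IH x; rewrite size_cat size_nseq IH. Qed.

Lemma sumn_RLD_Opp x s : x \in [:: p; q] ->
  sumn (RLD x s) + sumn (RLD (Opp x) s) = (p + q) * sumn s.
Proof.
have x_Opp y : y \in [:: p; q] -> y + Opp y = p + q.
  rewrite !inE /Opp => /orP[]/eqP->; rewrite ?eqxx //.
  by case: eqP => [-> | _] //; exact: addnC.
elim: s x => [|a s IH] x x_pq /=; first by rewrite muln0.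
rewrite OppK // !sumn_cat !sumn_nseq addnACA -mulnDl x_Opp //.
by rewrite [sumn _ + _]addnC IH // mulnDr.
Qed.

Lemma last_RLD (x d : nat) (s : seq nat) : 0 \notin s -> s != [::] ->
  Opp (last d (RLD x s)) = iter (size s) Opp x.
Proof.
elim: s x d => // a s IH x d /=; rewrite inE negb_or eq_sym -lt0n => /andP[a_gt0 s_pos] _.
case: s IH s_pos => [|b s] IH s_pos; first by rewrite cats0 -(subnK a_gt0) nseqD last_cat.
by rewrite last_cat IH // -iterSr.
Qed.

Fixpoint A_seq (s xs : seq nat) : seq nat :=
  if xs is x :: xs' then iter (size s) Opp x :: A_seq (RLD x s) xs' else [::].

Lemma A_seq_cat u v xs : A_seq v (A_seq u xs) = A_seq (u ++ v) xs.
Proof. by elim: xs u v => //= x xs IH u v; rewrite IH RLD_cat size_cat addnC iterD. Qed.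

Lemma A_seq_inj s xs ys : all (mem [:: p; q]) xs -> all (mem [:: p; q]) ys ->
  A_seq s xs = A_seq s ys -> xs = ys.
Proof.
elim: xs ys s => [|x xs IH] [|y ys] s //= /andP[x_pq xs_pq] /andP[y_pq ys_pq].
move=> [head_eq]; have x_y : x = y.
  by move: head_eq; rewrite !iter_Opp //; case: odd => // /(congr1 Opp); rewrite !OppK.
by rewrite x_y => tail_eq; rewrite (IH ys _ xs_pq ys_pq tail_eq).
Qed.

Lemma iter_A_seq_even s x xs k : ~~ odd (size s) -> x \in [:: p; q] ->
  iter k (A_seq s) (x :: xs) = x :: iter k (A_seq (RLD x s)) xs.
Proof. by move=> s_even x_pq; elim: k => //= k -> /=; rewrite iter_Opp // (negbTE s_even). Qed.

Definition RLD2 (s : seq nat) (x : nat) : seq nat := RLD x s ++ RLD (Opp x) s.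

Lemma A_seq_odd s x xs : odd (size s) -> x \in [:: p; q] ->
  A_seq s (x :: xs) = Opp x :: A_seq (RLD x s) xs.
Proof. by move=> s_odd x_pq /=; rewrite iter_Opp // s_odd. Qed.

Lemma iter_A_seq_odd s x xs k : odd (size s) -> x \in [:: p; q] ->
  iter k.*2 (A_seq s) (x :: xs) = x :: iter k (A_seq (RLD2 s x)) xs.
Proof.
move=> s_odd x_pq; elim: k => // k IH.
by rewrite doubleS !iterS IH !A_seq_odd ?Opp_in // OppK // A_seq_cat.
Qed.

Lemma exact_period_A_seq_even s x xs : ~~ odd (size s) -> x \in [:: p; q] ->
  exact_period (A_seq s) (x :: xs) =1 exact_period (A_seq (RLD x s)) xs.
Proof.
by move=> s_even x_pq; apply: eq_exact_period => k; rewrite iter_A_seq_even // eqseq_cons eqxx.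
Qed.

Lemma exact_period_A_seq_odd s x xs L : p != q -> odd (size s) -> x \in [:: p; q] ->
  exact_period (A_seq s) (x :: xs) L =
    ~~ odd L && exact_period (A_seq (RLD2 s x)) xs L./2.
Proof.
move=> pq s_odd x_pq; apply: exact_period_double => k.
  by rewrite iter_A_seq_odd // eqseq_cons eqxx.
by rewrite iterS iter_A_seq_odd // A_seq_odd // eqseq_cons (negbTE (Opp_neq x pq)).
Qed.

Lemma size_RLD2_even s x : ~~ odd (size (RLD2 s x)).
Proof. by rewrite size_cat !size_RLD addnn odd_double. Qed.

Lemma iter_A_seq_period s xs : all (mem [:: p; q]) xs ->
  iter (2 ^ uphalf (size xs)) (A_seq s) xs = xs.
Proof.
have [n] := ubnP (size xs); elim: n xs s => // n IH [|x xs] s //=.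
rewrite ltnS => size_xs /andP[x_pq xs_pq].
have [s_odd | s_even] := boolP (odd (size s)); last first.
  rewrite iter_A_seq_even //; congr (_ :: _); apply: iter_fix_dvdn (IH _ _ _ xs_pq) => //.
  by rewrite dvdn_exp2l // uphalf_half; case: odd.
rewrite expnS mul2n iter_A_seq_odd //; congr (_ :: _).
case: xs size_xs xs_pq => [_ _ | y zs size_zs /andP[y_pq zs_pq]]; first exact: iter_fix.
by rewrite iter_A_seq_even ?size_RLD2_even // IH // ltnW.
Qed.

Lemma odd_sumn_RLD2 s x : odd (p + q) -> x \in [:: p; q] ->
  odd (sumn (RLD2 s x)) = odd (sumn s).
Proof. by move=> pq_odd x_pq; rewrite sumn_cat sumn_RLD_Opp // oddM pq_odd. Qed.

Lemma odd_sumn_RLD_pq u : odd (p + q) ->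
  odd (sumn (RLD p u)) (+) odd (sumn (RLD q u)) = odd (sumn u).
Proof.
move=> pq_odd; have := sumn_RLD_Opp u (mem_head p [:: q]).
by rewrite /Opp eqxx => /(congr1 odd); rewrite oddD oddM pq_odd.
Qed.

Definition count_period (s : seq nat) (n L : nat) : nat :=
  count (exact_period (A_seq s) ^~ L) (words [:: p; q] n).

Lemma count_period_gt s n L : 2 ^ uphalf n < L -> count_period s n L = 0.
Proof.
move=> big_L; apply/eqP; rewrite -leqn0 leqNgt -has_count; apply/hasPn => w.
rewrite mem_words => /andP[/eqP size_w w_pq]; apply/negP.
move/(exact_period_le _ (iter_A_seq_period s w_pq)).
by rewrite size_w expn_gt0 /= => /(_ isT); rewrite leqNgt big_L.
Qed.

Lemma count_period_even s n L : ~~ odd (size s) ->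
  count_period s n.+1 L = count_period (RLD p s) n L + count_period (RLD q s) n L.
Proof.
move=> s_even; rewrite /count_period /= cats0 count_cat !count_map.
by congr (_ + _); apply: eq_count => w /=; rewrite exact_period_A_seq_even // !inE eqxx ?orbT.
Qed.

Lemma count_period_odd s n L : p != q -> odd (size s) ->
  count_period s n.+1 L =
    if odd L then 0 else count_period (RLD2 s p) n L./2 + count_period (RLD2 s q) n L./2.
Proof.
move=> pq s_odd; rewrite /count_period /= cats0 count_cat !count_map.
have [L_odd | L_even] := boolP (odd L).
  rewrite !(@eq_count _ _ pred0) ?count_pred0 // => w /=;
    by rewrite exact_period_A_seq_odd ?L_odd // !inE eqxx ?orbT.
by congr (_ + _); apply: eq_count => w /=;
  rewrite exact_period_A_seq_odd ?L_even // !inE eqxx ?orbT.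
Qed.

Lemma count_period1 t : p != q -> count_period t 1 2 = if odd (size t) then 2 else 0.
Proof.
move=> pq; have [t_odd | t_even] := boolP (odd (size t)).
  by rewrite count_period_odd.
by rewrite count_period_even.
Qed.

Lemma count_period_odd2 s m k : p != q -> odd (size s) ->
  count_period s m.+2 (2 ^ k.+1) =
    (count_period (RLD p (RLD2 s p)) m (2 ^ k) + count_period (RLD q (RLD2 s p)) m (2 ^ k)) +
    (count_period (RLD p (RLD2 s q)) m (2 ^ k) + count_period (RLD q (RLD2 s q)) m (2 ^ k)).
Proof.
move=> pq s_odd; rewrite count_period_odd // expnS mul2n odd_double doubleK.
by rewrite !count_period_even ?size_RLD2_even.
Qed.

Lemma count_period_main_even s j : ~~ odd (size s) -> count_period s j.*2.+3 (2 ^ j.+2) = 0.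
Proof.
move=> s_even; have big : 2 ^ uphalf j.*2.+2 < 2 ^ j.+2.
  by rewrite -doubleS uphalf_double ltn_exp2l.
by rewrite count_period_even // !count_period_gt.
Qed.

Lemma count_period_main j s : odd (p + q) ->
  count_period s j.*2.+3 (2 ^ j.+2) =
    if odd (size s) && odd (sumn s) then 2 ^ j.+3 else 0.
Proof.
move=> pq_odd; have pq : p != q by apply: contraTneq pq_odd => ->; rewrite addnn odd_double.
have parity x y t : x \in [:: p; q] -> odd (size (RLD y (RLD2 t x))) = odd (sumn t).
  by move=> x_pq; rewrite size_RLD odd_sumn_RLD2.
elim: j s => [|j IH] s; (have [s_odd | s_even] := boolP (odd (size s));
  last by rewrite count_period_main_even); rewrite /= count_period_odd2 //.
  by rewrite !count_period1 // !parity ?inE ?eqxx ?orbT //; case: odd.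
rewrite !IH !parity ?inE ?eqxx ?orbT //; case: (boolP (odd (sumn s))) => //= sum_odd.
have pair_sum u : odd (sumn u) ->
    (if odd (sumn (RLD p u)) then 2 ^ j.+3 else 0) +
    (if odd (sumn (RLD q u)) then 2 ^ j.+3 else 0) = 2 ^ j.+3.
  move=> u_odd; have := odd_sumn_RLD_pq u pq_odd; rewrite u_odd.
  by case: odd; case: odd; rewrite ?addn0.
by rewrite !pair_sum ?odd_sumn_RLD2 ?inE ?eqxx ?orbT // addnn -mul2n -expnS.
Qed.

End Automaton.

Lemma cardE_count (T : finType) (P : pred T) : #|P| = count P (enum T).
Proof. by rewrite cardE /enum_mem size_filter /= (@eq_filter _ _ predT) ?filter_predT. Qed.

Section StateAutomaton.

Variables (p q : nat) (s : seq nat).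
Hypotheses (p_gt0 : 0 < p) (q_gt0 : 0 < q).
Hypotheses (s_nil : s != [::]) (s_pq : all (mem [:: p; q]) s).

Lemma A_seqE t xs : t != [::] -> all (mem [:: p; q]) t -> all (mem [:: p; q]) xs ->
  A_seq p q t xs = [seq OppEnd p q (RLDn p q (take i.+1 xs) t) | i <- iota 0 (size xs)].
Proof.
have no0 u : all (mem [:: p; q]) u -> 0 \notin u.
  by move=> /allP u_pq; apply/negP => /u_pq; rewrite !inE ![0 == _]eq_sym !eqn0Ngt p_gt0 q_gt0.
elim: xs t => //= x xs IH t t_nil t_pq /andP[x_pq xs_pq].
rewrite /OppEnd /RLDn /= take0 /= last_RLD ?no0 //; congr (_ :: _).
have RLD_nil : RLD p q x t != [::].
  by case: t t_nil t_pq (no0 _ t_pq) => // -[|a] t.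
rewrite IH ?all_RLD // (iotaDl 1 0) -map_comp.
by apply: eq_map => i /=; rewrite add1n.
Qed.

Lemma all_val_state n (x : State p q n) : all (mem [:: p; q]) (map (@ssval _ _) x).
Proof. by apply/allP => _ /mapP[[a a_pq] _ ->]. Qed.

Lemma val_state_inj n : injective (fun x : State p q n => map (@ssval _ _) x).
Proof. by move=> x y /(inj_map val_inj) /val_inj. Qed.

Lemma val_A_map n (x : State p q n) :
  map (@ssval _ _) (A_map s x) = A_seq p q s (map (@ssval _ _) x).
Proof.
rewrite A_seqE ?all_val_state // size_map size_tuple -val_enum_ord /A_map /= -!map_comp.
by apply: eq_map.
Qed.

Lemma A_map_inj n : injective (@A_map p q n s).
Proof.
move=> x y eq_xy; apply: val_state_inj; apply: (@A_seq_inj p q s); rewrite ?all_val_state //.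
by rewrite -!val_A_map eq_xy.
Qed.

Hypothesis pq : p != q.

Lemma card_order_A_map n L :
  #|[set x : State p q n | order (A_map s) x == L]| = count_period p q s n L.
Proof.
pose phi (x : State p q n) := map (@ssval _ _) x.
have phi_uniq : uniq (map phi (enum (State p q n : finType))).
  by rewrite map_inj_uniq ?enum_uniq //; apply: val_state_inj.
have phi_sub : {subset map phi (enum (State p q n : finType)) <= words [:: p; q] n}.
  by move=> _ /mapP[x _ ->]; rewrite mem_words size_map size_tuple eqxx all_val_state.
have pq_uniq : uniq [:: p; q] by rewrite /= inE pq.
have phi_size : size (words [:: p; q] n) <= size (map phi (enum (State p q n : finType))).
  by rewrite size_words size_map -cardT card_tuple card_seq_sub.
have [_ phi_mem] := uniq_min_size phi_uniq phi_sub phi_size.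
have phi_perm := uniq_perm phi_uniq (uniq_words n pq_uniq) phi_mem.
rewrite /count_period -(permP phi_perm) count_map cardsE cardE_count.
apply: eq_count => x; rewrite /= -[eqn _ _]/(_ == _) (order_exact_period (@A_map_inj n)).
have iter_phi k : iter k (A_seq p q s) (phi x) = phi (iter k (A_map s) x).
  by elim: k => //= k ->; rewrite /phi val_A_map.
by apply: eq_exact_period => k; rewrite iter_phi (inj_eq (@val_state_inj n)).
Qed.

End StateAutomaton.

Theorem theorem3 (p q n : nat) (s : seq nat) :
  0 < p -> 0 < q -> odd (p + q) ->
  odd n -> 3 <= n ->
  s != [::] -> all (fun a => a \in [:: p; q]) s ->
  num_orbits_of_length (@A_map p q n s) (2 ^ uphalf n) =
  (if odd (size s) && odd (sumn s) then 2 else 0).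
Proof.
move=> p_gt0 q_gt0 pq_odd n_odd n_ge3 s_nil s_pq.
have pq : p != q by apply: contraTneq pq_odd => ->; rewrite addnn odd_double.
have [j ->] : exists j, n = j.*2.+3.
  exists (n./2).-1; rewrite -[n in LHS](odd_double_half n) n_odd add1n -doubleS prednK //.
  by rewrite half_gt0 ltnW.
have -> : uphalf j.*2.+3 = j.+2 by rewrite /= doubleK.
apply/eqP; rewrite -(eqn_pmul2l (expn_gt0 2 j.+2)) -card_order_eq; last exact: A_map_inj.
rewrite card_order_A_map // count_period_main //.
by case: ifP => _; rewrite ?muln0 // -expnSr.
Qed.
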